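(* Let $\boldsymbol{H}\in\mathbb{F}_q^{r\times m}$, $k\in\{2,\dots,r\}$, $i\in L\subseteq[m]$, and regard all entries of $\boldsymbol{H}_{[k]}^{L}$ as fixed except $h_{k,i}$. If $L$ is a circuit of $\boldsymbol{H}_{[k-1]}$, then there is exactly one value $c\in\mathbb{F}_q$ such that, when $h_{k,i}=c$, the columns of $\boldsymbol{H}_{[k]}$ indexed by $L$ are linearly dependent; for every $h_{k,i}\in\mathbb{F}_q\setminus\{c\}$, $L$ is an independent set of $\boldsymbol{H}_{[k]}$.
   Context: $\boldsymbol{H}_{[k]}$ is the submatrix of the first $k$ rows of $\boldsymbol{H}$ and $\boldsymbol{H}_{[k]}^{L}$ its submatrix with columns in $L$. For a matrix with columns indexed by $[m]$, $S\subseteq[m]$ is independent if the columns indexed by $S$ are linearly independent, dependent otherwise, and a circuit if it is dependent while every proper subset is independent. *)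

From HB Require Import structures.
From mathcomp Require Import all_boot all_order all_algebra.
Set Implicit Arguments. Unset Strict Implicit. Unset Printing Implicit Defensive.
Import GRing.Theory.
Local Open Scope ring_scope.

(* Columns of H_[k] (first k rows of H) indexed by S are linearly independent:
   every linear relation sum_{l in S} a_l * (column l of H_[k]) = 0 is trivial. *)
Definition indep_rows (F : fieldType) (r m : nat) (H : 'M[F]_(r, m))
    (k : nat) (S : {set 'I_m}) : Prop :=
  forall a : 'I_m -> F,
    (forall j : 'I_r, (j < k)%N -> \sum_(l in S) a l * H j l = 0) ->
    forall l, l \in S -> a l = 0.

Definition dep_rows (F : fieldType) (r m : nat) (H : 'M[F]_(r, m))
    (k : nat) (S : {set 'I_m}) : Prop := ~ indep_rows H k S.

Definition circuit_rows (F : fieldType) (r m : nat) (H : 'M[F]_(r, m))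
    (k : nat) (S : {set 'I_m}) : Prop :=
  dep_rows H k S /\ forall T : {set 'I_m}, T \proper S -> indep_rows H k T.

(* H with the entry in (0-based) row index a0 and column i replaced by c. *)
Definition set_entry (F : fieldType) (r m : nat) (H : 'M[F]_(r, m))
    (a0 : nat) (i : 'I_m) (c : F) : 'M[F]_(r, m) :=
  \matrix_(a < r, b < m) (if (nat_of_ord a == a0) && (b == i) then c else H a b).

From HB Require Import structures.
From mathcomp Require Import all_boot all_order all_algebra.
From Stdlib Require Import Classical.
Set Implicit Arguments.
Unset Strict Implicit.
Unset Printing Implicit Defensive.

Import GRing.Theory.
Local Open Scope ring_scope.

(* Since L is a circuit of H_[k-1], its linear relations form a line spanned by
   some a with a_i <> 0.  Adding row k only adds the equation
   a_i h_{k,i} + sum_{l in L\i} a_l h_{k,l} = 0 for the generator a, which has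
   exactly one solution h_{k,i}; any relation of H_[k] is a multiple of a, so
   when this equation fails it must be zero. *)

Definition row_relation (F : fieldType) (r m : nat) (H : 'M[F]_(r, m))
    (k : nat) (S : {set 'I_m}) (a : 'I_m -> F) : Prop :=
  forall j : 'I_r, (j < k)%N -> \sum_(l in S) a l * H j l = 0.

Section RowRelations.

Variables (F : fieldType) (r m : nat) (H : 'M[F]_(r, m)).

Lemma dep_rowsP (k : nat) (S : {set 'I_m}) :
  dep_rows H k S ->
  exists2 a, row_relation H k S a & exists2 l, l \in S & a l != 0.
Proof.
move=> depS; apply: NNPP => no_rel; apply: depS => a rel_a l lS.
apply/eqP/negbNE/negP => al; apply: no_rel; by exists a => //; exists l.
Qed.

Lemma row_relation_lin (k : nat) (S : {set 'I_m}) (a b : 'I_m -> F) (t : F) :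
  row_relation H k S a -> row_relation H k S b ->
  row_relation H k S (fun l => b l - t * a l).
Proof.
move=> rel_a rel_b j jk.
under eq_bigr do rewrite mulrBl -mulrA.
by rewrite sumrB -mulr_sumr rel_a // rel_b // mulr0 subrr.
Qed.

Lemma row_relation_setD1 (k : nat) (S : {set 'I_m}) (i : 'I_m) (a : 'I_m -> F) :
  i \in S -> a i = 0 -> row_relation H k S a -> row_relation H k (S :\ i) a.
Proof.
move=> iS ai rel_a j jk.
by have := rel_a j jk; rewrite (big_setD1 i iS) /= ai mul0r add0r.
Qed.

Lemma row_relationS (n : nat) (nr : (n < r)%N) (S : {set 'I_m}) (a : 'I_m -> F) :
  row_relation H n.+1 S a <->
  row_relation H n S a /\ \sum_(l in S) a l * H (Ordinal nr) l = 0.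
Proof.
split=> [rel_a | [rel_a row_n] j].
  by split=> [j jn|]; apply: rel_a => //; apply: ltnW.
rewrite ltnS leq_eqVlt => /orP[/eqP jn | ]; last exact: rel_a.
by rewrite (_ : j = Ordinal nr) //; apply: val_inj.
Qed.

Section Circuit.

Variables (k : nat) (L : {set 'I_m}) (i : 'I_m).
Hypotheses (circuitL : circuit_rows H k L) (iL : i \in L).

Lemma circuit_relation_eq0 (a : 'I_m -> F) :
  row_relation H k L a -> a i = 0 -> forall l, l \in L -> a l = 0.
Proof.
move=> rel_a ai l lL; have [-> // | li] := eqVneq l i.
apply: (circuitL.2 _ (properD1 iL)) (row_relation_setD1 iL ai rel_a) _ _.
by rewrite in_setD1 li.
Qed.

Lemma circuit_relation_neq0 (a : 'I_m -> F) :
  row_relation H k L a -> (exists2 l, l \in L & a l != 0) -> a i != 0.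
Proof.
move=> rel_a [l lL]; apply: contraNneq => ai; apply/eqP.
exact: (circuit_relation_eq0 rel_a ai lL).
Qed.

Lemma circuit_relation_scale (a b : 'I_m -> F) :
  row_relation H k L a -> a i != 0 -> row_relation H k L b ->
  forall l, l \in L -> b l = b i / a i * a l.
Proof.
move=> rel_a ai0 rel_b l lL; apply/eqP; rewrite -subr_eq0; apply/eqP.
apply: (circuit_relation_eq0 (row_relation_lin _ rel_a rel_b)) => //.
by rewrite divfK // subrr.
Qed.

End Circuit.

End RowRelations.

Section SetEntry.

Variables (F : fieldType) (r m : nat) (H : 'M[F]_(r, m)).
Variables (n : nat) (i : 'I_m) (c : F).

Lemma row_relation_set_entry (S : {set 'I_m}) (a : 'I_m -> F) :
  row_relation (set_entry H n i c) n S a <-> row_relation H n S a.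
Proof.
suff eq_sum (j : 'I_r) : (j < n)%N ->
    \sum_(l in S) a l * set_entry H n i c j l = \sum_(l in S) a l * H j l.
  by split=> rel_a j jn; [rewrite -eq_sum | rewrite eq_sum]; rewrite ?rel_a.
move=> jn; apply: eq_bigr => l _.
by rewrite mxE (_ : (nat_of_ord j == n) = false) // ltn_eqF.
Qed.

Lemma sum_set_entry_row (nr : (n < r)%N) (S : {set 'I_m}) (b : 'I_m -> F) :
  i \in S ->
  \sum_(l in S) b l * set_entry H n i c (Ordinal nr) l
  = b i * c + \sum_(l in S :\ i) b l * H (Ordinal nr) l.
Proof.
move=> iS; rewrite (big_setD1 i iS) /= mxE !eqxx; congr (_ + _).
apply: eq_bigr => l; rewrite in_setD1 mxE eqxx => /andP[li _].
by rewrite (negbTE li).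
Qed.

End SetEntry.

Section CircuitExtension.

Variables (F : fieldType) (r m : nat) (H : 'M[F]_(r, m)).
Variables (n : nat) (L : {set 'I_m}) (i : 'I_m) (a : 'I_m -> F).
Hypotheses (nr : (n < r)%N) (iL : i \in L) (circuitL : circuit_rows H n L).
Hypotheses (rel_a : row_relation H n L a) (ai0 : a i != 0).

Let s := \sum_(l in L :\ i) a l * H (Ordinal nr) l.

Lemma circuit_extension_dep : dep_rows (set_entry H n i (- s / a i)) n.+1 L.
Proof.
move=> indep; move/eqP: ai0; apply; apply: indep iL.
apply/row_relationS; split; first exact/row_relation_set_entry.
by rewrite sum_set_entry_row // mulrC divfK // addNr.
Qed.

Lemma circuit_extension_indep (c : F) :
  c != - s / a i -> indep_rows (set_entry H n i c) n.+1 L.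
Proof.
move=> cNs b /row_relationS[/row_relation_set_entry rel_b row_n] l lL.
have b_scale := circuit_relation_scale circuitL iL rel_a ai0 rel_b.
have : b i / a i * (a i * c + s) = 0.
  rewrite -row_n sum_set_entry_row // mulrDr mulrA divfK // /s mulr_sumr.
  congr (_ + _); apply: eq_bigr => l' /setD1P[_ l'L].
  by rewrite mulrA -b_scale.
move/eqP; rewrite mulf_eq0 => /orP[/eqP bi0 | ].
  by rewrite b_scale // bi0 mul0r.
rewrite addr_eq0 => /eqP ais; case/eqP: cNs.
by rewrite -ais mulrC mulKf.
Qed.

End CircuitExtension.

Lemma circuit_extension (F : fieldType) (r m : nat) (H : 'M[F]_(r, m))
    (n : nat) (i : 'I_m) (L : {set 'I_m}) :
  (n < r)%N -> i \in L -> circuit_rows H n L ->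
  exists c : F,
    dep_rows (set_entry H n i c) n.+1 L /\
    forall c' : F, c' != c -> indep_rows (set_entry H n i c') n.+1 L.
Proof.
move=> nr iL circuitL.
have [a rel_a nz_a] := dep_rowsP circuitL.1.
have ai0 := circuit_relation_neq0 circuitL iL rel_a nz_a.
eexists; split; first exact: (circuit_extension_dep iL rel_a ai0).
exact: circuit_extension_indep.
Qed.

(* Rows are 1-based in the paper: h_{k,i} is the entry at 0-based row k.-1. *)
Theorem proposition3 (F : finFieldType) (r m : nat) (H : 'M[F]_(r, m))
    (k : nat) (i : 'I_m) (L : {set 'I_m}) :
  (2 <= k)%N -> (k <= r)%N -> i \in L ->
  circuit_rows H k.-1 L ->
  exists c : F,
    dep_rows (set_entry H k.-1 i c) k L /\
    forall c' : F, c' != c -> indep_rows (set_entry H k.-1 i c') k L.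
Proof. by case: k => // n _; exact: circuit_extension. Qed.
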